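(* Fix integers $d\ge 2$ and $B\ge 2$. There exists a monotone function $\psi:\mathbb{R}\to\mathbb{R}$ such that for every function $f:[0,1]^d\to\mathbb{R}$ (no continuity assumed) there exists a function $g:\mathbb{R}\to\mathbb{R}$ with $$f(x_1,\ldots,x_d)=g\Big(\sum_{p=1}^d B^{-p}\psi(x_p)\Big)\qquad\text{for all }(x_1,\ldots,x_d)\in[0,1]^d.$$ *)

From mathcomp Require Import all_boot all_order all_algebra.
From mathcomp Require Import reals.
Set Implicit Arguments. Unset Strict Implicit. Unset Printing Implicit Defensive.
Import Order.TTheory GRing.Theory Num.Theory.
Local Open Scope ring_scope.

Definition monotone_fun (R : realType) (psi : R -> R) : Prop :=
  (forall x y : R, x <= y -> psi x <= psi y) \/
  (forall x y : R, x <= y -> psi y <= psi x).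

(* Let z_p = x_p / 2 in [0, 1/2] and write z_p in binary (digits taken from floors,
   so the expansion never ends in 1s).  The inner function psi re-reads the binary
   digits of z_p in the large base E = 4 (d+1) B^d.  Then
     Phi x = sum_p B^-p psi(x_p) = sum_k column_k(x) E^-(k+1),
   where column_k(x) = sum_p B^-p (k-th bit of z_p) = code_k(x) / B^d and code_k(x)
   is the integer with base-B digits the k-th bits of z_1, ..., z_d.  Since E is large
   compared to the columns, the first column where the codes of two points differ
   decides the order of their images; distinct points of the cube differ in some bit
   of some coordinate, hence in some code.  So Phi is injective on the cube, and any
   f factors as g o Phi with g = f o (partial inverse of Phi). *)

From mathcomp Require Import all_boot all_order all_algebra.
From mathcomp Require Import boolp classical_sets functions reals.
From mathcomp Require Import lra zify.
Set Implicit Arguments. Unset Strict Implicit. Unset Printing Implicit Defensive.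
Import Order.TTheory GRing.Theory Num.Theory.

Lemma digits_inj (B n : nat) (b b' : 'I_n -> nat) : 0 < B ->
  (forall i, b i < B) -> (forall i, b' i < B) ->
  \sum_(i < n) b i * B ^ i = \sum_(i < n) b' i * B ^ i -> b =1 b'.
Proof.
move=> B0; elim: n b b' => [|n IH] b b' hb hb' e i; first by case: i.
have shift (c : 'I_n.+1 -> nat) : \sum_(i < n.+1) c i * B ^ i
    = c ord0 + B * \sum_(i < n) c (lift ord0 i) * B ^ i.
  rewrite big_ord_recl expn0 muln1 big_distrr /=.
  by apply/congr1/eq_bigr => j _; rewrite expnS mulnCA.
move: e; rewrite !shift => e.
have e0 : b ord0 = b' ord0.
  have low c X : (c + B * X) %% B = c %% B by rewrite -modnDmr modnMr addn0.
  by have := congr1 (modn^~ B) e; rewrite /= !low !modn_small.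
move: e; rewrite e0 => /addnI /eqP; rewrite eqn_pmul2l // => /eqP e.
have [j ->|->] := unliftP ord0 i; last exact: e0.
by apply: (IH (b \o lift ord0) (b' \o lift ord0)) => // k; [apply: hb | apply: hb'].
Qed.

Local Open Scope ring_scope.

Section Expansion.
Variables (R : realType) (E : R).
Hypothesis E2 : 2 <= E.

Definition psum (u : nat -> R) (n : nat) : R := \sum_(k < n) u k * E ^- k.+1.

(* X is the value of the expansion with digits u, up to the tail estimate valid for
   digits in [0, M]; this is the only property of X used in comparisons. *)
Definition approx (M : R) (u : nat -> R) (X : R) : Prop :=
  forall n, psum u n <= X <= psum u n + 2 * M * E ^- n.+1.

Definition expansion (u : nat -> R) : R := sup (range (psum u)).

Lemma E_gt0 : 0 < E. Proof. exact: lt_le_trans E2. Qed.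

Lemma Einv_gt0 k : 0 < E ^- k.
Proof. by rewrite invr_gt0 exprn_gt0 // E_gt0. Qed.

Section Digits.
Variables (u : nat -> R) (M : R).
Hypothesis u_bnd : forall k, 0 <= u k <= M.

Let M_ge0 : 0 <= M. Proof. by case/andP: (u_bnd 0) => /le_trans; apply. Qed.

Lemma psum_le n m : (n <= m)%N -> psum u n <= psum u m.
Proof.
move=> /subnKC <-; elim: (m - n)%N => [|j IH]; first by rewrite addn0.
apply: (le_trans IH); rewrite addnS /psum big_ord_recr /= lerDl.
by apply: mulr_ge0; [case/andP: (u_bnd (n + j)) | exact/ltW/Einv_gt0].
Qed.

(* Geometric tail estimate: since E >= 2, the digits beyond position n contribute
   less than 2 M E^-(n+1). *)
Lemma psum_tail n j :
  psum u (n + j) - psum u n + 2 * M * E ^- (n + j).+1 <= 2 * M * E ^- n.+1.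
Proof.
elim: j => [|j IH]; first by rewrite addn0 subrr add0r.
rewrite addnS /psum big_ord_recr /= -/(psum u (n + j)) -/(psum u n).
have last_digit : u (n + j) * E ^- (n + j).+1 <= M * E ^- (n + j).+1.
  by rewrite ler_wpM2r ?(ltW (Einv_gt0 _)) //; case/andP: (u_bnd (n + j)).
have halve : 2 * M * E ^- (n + j).+2 <= M * E ^- (n + j).+1.
  have twoEinv : 2 * E^-1 <= 1 by rewrite ler_pdivrMr ?E_gt0 // mul1r.
  have p0 := ltW (Einv_gt0 (n + j).+1).
  have q0 : 0 <= E^-1 by rewrite invr_ge0 ltW ?E_gt0.
  have Mp0 := mulr_ge0 M_ge0 p0.
  rewrite exprS invfM; move: (E^-1) (E^-(n + j).+1) twoEinv p0 q0 Mp0 => q p *; nra.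
lra.
Qed.

Lemma expansion_approx : approx M u (expansion u).
Proof.
move=> n.
have tail_ge0 k : 0 <= 2 * M * E ^- k by rewrite !mulr_ge0 ?(ltW (Einv_gt0 _)).
have ub m : psum u m <= psum u n + 2 * M * E ^- n.+1.
  have [/subnKC <-|/ltnW lt] := leqP n m.
    by have := psum_tail n (m - n); have := tail_ge0 (n + (m - n)).+1; lra.
  by have := psum_le lt; have := tail_ge0 n.+1; lra.
have bounded : has_sup (range (psum u)).
  by split; [exists (psum u 0), 0%N | exists (psum u n + 2 * M * E ^- n.+1) => _ [m _ <-]].
apply/andP; split; first by apply: sup_upper_bound => //; exists n.
by apply: ge_sup; [exists (psum u 0), 0%N | move=> _ [m _ <-]].
Qed.

End Digits.

Lemma approx_sum (I : finType) (c M : I -> R) (u : I -> nat -> R) (X : I -> R) :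
  (forall i, 0 <= c i) -> (forall i, approx (M i) (u i) (X i)) ->
  approx (\sum_i c i * M i) (fun k => \sum_i c i * u i k) (\sum_i c i * X i).
Proof.
move=> c_ge0 hX n.
have -> : psum (fun k => \sum_i c i * u i k) n = \sum_i c i * psum (u i) n.
  rewrite /psum; under eq_bigr do rewrite mulr_suml.
  rewrite exchange_big /=; apply: eq_bigr => i _; rewrite mulr_sumr.
  by apply: eq_bigr => k _; rewrite mulrA.
rewrite mulr_sumr mulr_suml -big_split /=; apply/andP; split.
  by apply: ler_sum => i _; rewrite ler_wpM2l //; case/andP: (hX i n).
apply: ler_sum => i _; case/andP: (hX i n) => _ /(ler_wpM2l (c_ge0 i)) /le_trans.
by apply; rewrite mulrDr !mulrA (mulrC (c i) 2).
Qed.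

Lemma approx_lt (u u' : nat -> R) M M' dl k X X' : 2 * M < dl * E ->
  approx M u X -> approx M' u' X' ->
  (forall j, (j < k)%N -> u j = u' j) -> u k + dl <= u' k -> X < X'.
Proof.
move=> hdl hX hX' heq hk.
have eq_psum : psum u k = psum u' k by apply: eq_bigr => i _; rewrite heq.
have /andP[_ X_le] := hX k.+1; have /andP[X'_ge _] := hX' k.+1.
move: X_le X'_ge; rewrite /psum !big_ord_recr /= -/(psum u k) -/(psum u' k) eq_psum.
have p0 := Einv_gt0 k.+1.
have q0 : 0 < E^-1 by rewrite invr_gt0 E_gt0.
have hdl' : 2 * M * E^-1 < dl by rewrite ltr_pdivrMr ?E_gt0.
rewrite [E ^+ k.+2]exprS invfM.
move: (E^-1) (E^-k.+1) p0 q0 hdl' => q p p0 q0 hdl' X_le X'_ge.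
have gap : 0 < (dl - 2 * M * q) * p by apply: mulr_gt0 => //; lra.
have dig : 0 <= (u' k - u k - dl) * p by apply: mulr_ge0; lra.
rewrite !mulrBl in gap dig; lra.
Qed.

End Expansion.

Section DyadicDigits.
Variable R : realType.

(* The k-th binary digit of z after the point (for 0 <= z), read off from floors. *)
Definition bit (z : R) (k : nat) : bool :=
  Num.floor (2 ^+ k.+1 * z) != 2 * Num.floor (2 ^+ k * z).

Lemma floor_double (z : R) k :
  Num.floor (2 ^+ k.+1 * z) = 2 * Num.floor (2 ^+ k * z) + (bit z k : nat)%:Z.
Proof.
set n := Num.floor (2 ^+ k * z).
have /andP[lo hi] := floor_itv (2 ^+ k * z); rewrite -/n in lo hi.
have l1 : 2 * n <= Num.floor (2 ^+ k.+1 * z).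
  by rewrite floor_ge_int rmorphM /= exprS -mulrA; lra.
have l2 : Num.floor (2 ^+ k.+1 * z) < 2 * n + 2.
  rewrite floor_lt_int rmorphD rmorphM /= exprS -mulrA.
  by rewrite rmorphD /= in hi; lra.
rewrite /bit -/n; case: eqP => [->|ne] /=; first by rewrite addr0.
by clear lo hi; clearbody n; move: (Num.floor _) l1 l2 ne => m; lia.
Qed.

(* Archimedes: two distinct reals are separated at some dyadic scale. *)
Lemma floor_dyadic_separates (z w : R) : z < w ->
  exists n, Num.floor (2 ^+ n * z) < Num.floor (2 ^+ n * w).
Proof.
move=> zw; have wz : 0 < w - z by lra.
pose N := (Num.truncn ((w - z)^-1)).+1.
have hN : (w - z)^-1 < N%:R by apply: truncnS_gt.
have N_le : (N%:R : R) <= 2 ^+ N by rewrite -natrX ler_nat ltnW // ltn_expl.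
have scaled : 1 <= 2 ^+ N * (w - z).
  apply/ltW/(lt_le_trans _ (ler_wpM2r (ltW wz) N_le)).
  by rewrite -ltr_pdivrMr // mul1r.
exists N; rewrite -lezD1 floor_ge_int rmorphD /=.
by have := floor_le (2 ^+ N * z); lra.
Qed.

Lemma bit_first_diff (z w : R) : 0 <= z -> w < 1 -> z < w ->
  exists k, (forall j, (j < k)%N -> bit z j = bit w j) /\ ~~ bit z k /\ bit w k.
Proof.
move=> z0 w1 zw.
pose P k := Num.floor (2 ^+ k * z) < Num.floor (2 ^+ k * w).
have [k Pk k_min] := ex_minnP (floor_dyadic_separates zw : exists k, P k).
have eq_floor i : (i < k)%N -> Num.floor (2 ^+ i * z) = Num.floor (2 ^+ i * w).
  move=> ik; have mono : Num.floor (2 ^+ i * z) <= Num.floor (2 ^+ i * w).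
    by apply: le_floor; rewrite ler_pM2l ?exprn_gt0 // ltW.
  apply/eqP; rewrite eq_le mono /= leNgt; apply/negP => /k_min.
  by rewrite leqNgt ik.
case: k Pk {k_min} eq_floor => [|k] Pk eq_floor.
  by move: Pk; rewrite /P expr0 !mul1r !(@floor_def _ _ 0) ?ltxx //; lra.
exists k; split.
  move=> j jk; have := eq_floor j.+1 jk.
  rewrite !floor_double (eq_floor j (ltn_trans jk (ltnSn _))) => /addrI [].
  by case: (bit z j); case: (bit w j).
move: Pk; rewrite /P !floor_double (eq_floor k (ltnSn k)) ltrD2l.
by case: (bit z k); case: (bit w k).
Qed.

End DyadicDigits.

Section Construction.
Variables (R : realType) (d B : nat).
Hypothesis B_gt1 : (1 < B)%N.

(* The outer base, large enough that the carries between columns cannot interact. *)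
Definition base : R := (4 * d.+1 * B ^ d)%:R.

Lemma base_ge4 : 4 <= base.
Proof.
rewrite /base ler_nat; have : (0 < B ^ d)%N by rewrite expn_gt0 ltnW.
by move: (B ^ d)%N => X; nia.
Qed.

Let base_ge2 : 2 <= base. Proof. by have := base_ge4; lra. Qed.

Definition halfclamp (t : R) : R := if t < 0 then 0 else if 1 < t then 1 / 2 else t / 2.

Lemma halfclamp_range t : 0 <= halfclamp t < 1.
Proof. by rewrite /halfclamp; case: ifP => ?; [lra | case: ifP => ?; lra]. Qed.

Lemma halfclamp_le t s : t <= s -> halfclamp t <= halfclamp s.
Proof. by rewrite /halfclamp => ts; do !case: ifP => ? //; lra. Qed.

Lemma halfclamp_unit t : 0 <= t <= 1 -> halfclamp t = t / 2.
Proof. by rewrite /halfclamp => /andP[t0 t1]; rewrite ltNge t0 /= ltNge t1. Qed.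

Definition digit (z : R) (k : nat) : R := (bit z k : nat)%:R.

Lemma digit_range z k : 0 <= digit z k <= 1.
Proof. by rewrite /digit; case: (bit z k); rewrite /= ?ler01 ?lexx. Qed.

Definition Psi (z : R) : R := expansion base (digit z).
Definition psi (t : R) : R := Psi (halfclamp t).

Lemma Psi_approx z : approx base 1 (digit z) (Psi z).
Proof. exact: (expansion_approx base_ge2 (digit_range z)). Qed.

(* Psi is strictly increasing on [0, 1): the first differing bit decides. *)
Lemma Psi_lt z w : 0 <= z -> w < 1 -> z < w -> Psi z < Psi w.
Proof.
move=> z0 w1 zw; have [k [same [zk wk]]] := bit_first_diff z0 w1 zw.
apply: (approx_lt base_ge2 _ (Psi_approx z) (Psi_approx w) (k := k) (dl := 1)).
- by have := base_ge4; lra.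
- by move=> j /same; rewrite /digit => ->.
- by rewrite /digit (negbTE zk) wk add0r.
Qed.

Lemma psi_monotone : monotone_fun psi.
Proof.
left=> t s ts; rewrite /psi; have := halfclamp_le ts.
rewrite le_eqVlt => /orP[/eqP -> //|lt]; apply/ltW/Psi_lt => //.
- by case/andP: (halfclamp_range t).
- by case/andP: (halfclamp_range s).
Qed.

Definition Phi (x : 'I_d -> R) : R := \sum_(i < d) B%:R ^- i.+1 * psi (x i).

(* The k-th digit of Phi x in base `base`: the k-th binary digits of the coordinates,
   placed at the base-B positions 1, ..., d. *)
Definition column (x : 'I_d -> R) (k : nat) : R :=
  \sum_(i < d) B%:R ^- i.+1 * digit (halfclamp (x i)) k.

(* The same column as a base-B integer, most significant digit first. *)
Definition code (x : 'I_d -> R) (k : nat) : nat :=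
  (\sum_(i < d) bit (halfclamp (x i)) k * B ^ (d - i.+1))%N.

Lemma B_gt0 : 0 < (B%:R : R). Proof. by rewrite ltr0n ltnW. Qed.

Lemma weight_range i : 0 <= (B%:R : R) ^- i <= 1.
Proof.
rewrite invr_ge0 exprn_ge0 ?(ltW B_gt0) //= invf_le1 ?exprn_gt0 ?B_gt0 //.
by rewrite exprn_ege1 // ler1n ltnW.
Qed.

Lemma Phi_approx x :
  approx base (\sum_(i < d) B%:R ^- i.+1) (column x) (Phi x).
Proof.
have := approx_sum (c := fun i : 'I_d => B%:R ^- i.+1) (M := fun=> 1)
  (X := fun i => psi (x i)) (fun i => proj1 (andP (weight_range i.+1)))
  (fun i => Psi_approx (halfclamp (x i))).
by under eq_bigr do rewrite mulr1.
Qed.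

(* Columns are integers scaled by B^-d, so distinct columns differ by B^-d. *)
Lemma column_code x k : column x k = (code x k)%:R / B%:R ^+ d.
Proof.
rewrite /column /code natr_sum mulr_suml; apply: eq_bigr => i _.
have Bd : (B%:R : R) ^+ d = B%:R ^+ i.+1 * B%:R ^+ (d - i.+1).
  by rewrite -exprD subnKC.
have Bn0 n : (B%:R : R) ^+ n != 0 by rewrite expf_neq0 // gt_eqF ?B_gt0.
by rewrite natrM natrX Bd invfM [_^-1 * _^-1]mulrC mulrA mulfK // mulrC.
Qed.

Lemma code_rev x k :
  code x k = (\sum_(j < d) bit (halfclamp (x (rev_ord j))) k * B ^ j)%N.
Proof.
rewrite /code (reindex_inj rev_ord_inj) /=; apply: eq_bigr => j _.
by rewrite subnSK // subKn // ltnW.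
Qed.

Lemma Phi_lt x y k : (forall j, (j < k)%N -> code x j = code y j) ->
  (code x k < code y k)%N -> Phi x < Phi y.
Proof.
move=> same lt_k.
apply: (approx_lt base_ge2 _ (Phi_approx x) (Phi_approx y) (k := k)
  (dl := (B%:R ^+ d)^-1)).
- have weights : \sum_(i < d) (B%:R : R) ^- i.+1 <= d%:R.
    have -> : (d%:R : R) = \sum_(i < d) 1 by rewrite sumr_const card_ord.
    by apply: ler_sum => i _; case/andP: (weight_range i.+1).
  have Bd0 : (B%:R : R) ^+ d != 0 by rewrite expf_neq0 // gt_eqF ?B_gt0.
  rewrite /base !natrM natrX [_ * _ ^+ d]mulrC mulKf // mulrSr.
  by have := ler0n R d; lra.
- by move=> j /same; rewrite !column_code => ->.
- rewrite !column_code -[X in _ + X]mul1r -mulrDl ler_wpM2r ?natr1 ?ler_nat //.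
  by rewrite invr_ge0 exprn_ge0 // ltW ?B_gt0.
Qed.

Lemma code_separates x y i : 0 <= x i -> y i <= 1 -> x i < y i ->
  exists k, code x k != code y k.
Proof.
move=> x0 y1 lt.
have ux : 0 <= x i <= 1 by apply/andP; split; lra.
have uy : 0 <= y i <= 1 by apply/andP; split; lra.
have /andP[z0 _] := halfclamp_range (x i).
have /andP[_ w1] := halfclamp_range (y i).
have zw : halfclamp (x i) < halfclamp (y i) by rewrite !halfclamp_unit //; lra.
have [k [_ [zk wk]]] := bit_first_diff z0 w1 zw.
exists k; apply/eqP; rewrite !code_rev => same.
have bit_lt (v : 'I_d -> R) j : (bit (halfclamp (v (rev_ord j))) k < B)%N.
  exact: leq_ltn_trans (leq_b1 _) B_gt1.
have := digits_inj (ltnW B_gt1) (bit_lt x) (bit_lt y) same (rev_ord i).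
by rewrite rev_ordK (negbTE zk) wk.
Qed.

Lemma Phi_neq x y : (exists k, code x k != code y k) -> Phi x != Phi y.
Proof.
move=> diff; have [k ne k_min] := ex_minnP diff.
have same j : (j < k)%N -> code x j = code y j.
  by move=> jk; apply/eqP; apply: contraTT jk => /k_min; rewrite -leqNgt.
have [lt|gt|eq] := ltngtP (code x k) (code y k).
- by rewrite lt_eqF // (Phi_lt same lt).
- by rewrite gt_eqF // (Phi_lt (fun j jk => esym (same j jk)) gt).
- by rewrite eq eqxx in ne.
Qed.

Definition cube : set ('I_d -> R) := [set x | forall i, 0 <= x i <= 1].

Lemma Phi_inj : {in cube &, injective Phi}.
Proof.
move=> x y /[!inE] hx hy eq_Phi; apply/funext => i.
have [lt|gt|//] := ltgtP (x i) (y i); exfalso.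
- have /andP[x0 _] := hx i; have /andP[_ y1] := hy i.
  by have := Phi_neq (code_separates x0 y1 lt); rewrite eq_Phi eqxx.
- have /andP[_ x1] := hx i; have /andP[y0 _] := hy i.
  by have := Phi_neq (code_separates y0 x1 gt); rewrite eq_Phi eqxx.
Qed.
End Construction.

Theorem lemma1 (R : realType) (d B : nat) (hd : (2 <= d)%N) (hB : (2 <= B)%N) :
  exists psi : R -> R, monotone_fun psi /\
    forall f : ('I_d -> R) -> R, exists g : R -> R,
      forall x : 'I_d -> R, (forall i, 0 <= x i <= 1) ->
        f x = g (\sum_(i < d) (B%:R) ^- i.+1 * psi (x i)).
Proof.
exists (psi d B); split; first exact: psi_monotone hB.
move=> f; exists (f \o 'pinv_(fun=> fun=> 0) (@cube R d) (@Phi R d B)) => x cube_x /=.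
by rewrite pinvKV //; [exact: Phi_inj hB | rewrite inE].
Qed.
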